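(* Let $k\ge1$. The T-ideal of $F(\mathfrak B)$ generated by (the element corresponding to) $(y_1z_2-y_2z_1)^k$ contains $(y_1z_1)^k(y_1-z_1)^k$, and hence contains $(y_1z_1)^k(y_1-z_1)^k\,w^{(j)}_\mu$ for every partition $\mu=(\mu_1,\mu_2)$ and every admissible $j$.
   Context: $K$ is a field of characteristic $0$. $\mathfrak B$ is the variety of bicommutative algebras (identities $(x_1x_2)x_3=(x_1x_3)x_2$, $x_1(x_2x_3)=x_2(x_1x_3)$), with free algebra $F(\mathfrak B)$ on $x_1,x_2,\dots$; a T-ideal is a two-sided ideal closed under all endomorphisms. Model: with $K[Y,Z]$ the commutative polynomial ring in $y_1,y_2,\dots,z_1,z_2,\dots$, the algebra $G$ has basis $\{x_i\}\cup\{Y^\alpha Z^\beta:|\alpha|,|\beta|>0\}$ and multiplication $x_ix_j=y_iz_j$, $x_i\cdot(Y^\alpha Z^\beta)=y_iY^\alpha Z^\beta$, $(Y^\alpha Z^\beta)\cdot x_j=Y^\alpha Z^\beta z_j$, $(Y^\alpha Z^\beta)(Y^\gamma Z^\delta)=Y^{\alpha+\gamma}Z^{\beta+\delta}$; it is known that $x_i\mapsto x_i$ gives an isomorphism $F(\mathfrak B)\cong G$, so elements of $F(\mathfrak B)^2$ are polynomials in the $y_i,z_i$ of positive degree in both sets, and the product in $G$ of two such elements is their product as polynomials. The elements $w^{(j)}_\mu$ are $w^{(j)}_{(n)}=y_1^jz_1^{n-j}$ ($1\le j\le n-1$) and, for $\mu_2>0$, $w^{(j)}_\mu=y_1^j(y_1z_2-y_2z_1)^{\mu_2}z_1^{\mu_1-\mu_2-j}$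 ($0\le j\le\mu_1-\mu_2$). *)

From HB Require Import structures.
From mathcomp Require Import all_boot all_order all_algebra.
Set Implicit Arguments. Unset Strict Implicit. Unset Printing Implicit Defensive.
Import Order.TTheory GRing.Theory Num.Theory.
Local Open Scope ring_scope.

(* Concrete model G of the free bicommutative algebra F(B) over a field K.
   Variables y_1,y_2,... and z_1,z_2,... are indexed from 0:  y_{i+1} is "y i".
   Polynomials of K[Y,Z] are represented by their polynomial functions
   (K has characteristic 0, hence is infinite, so this is faithful). *)

Section Model.
Variable K : fieldType.

Definition pfun := (nat -> K) -> (nat -> K) -> K.

Inductive is_poly : pfun -> Prop :=
| PolyC (c : K) : is_poly (fun _ _ => c)
| PolyY (i : nat) : is_poly (fun y _ => y i)
| PolyZ (i : nat) : is_poly (fun _ z => z i)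
| PolyAdd (p q : pfun) : is_poly p -> is_poly q -> is_poly (fun y z => p y z + q y z)
| PolyMul (p q : pfun) : is_poly p -> is_poly q -> is_poly (fun y z => p y z * q y z).

(* polynomials of positive degree in both sets of variables (= F(B)^2):
   no monomial free of the y's, no monomial free of the z's *)
Definition is_sq_poly (p : pfun) : Prop :=
  [/\ is_poly p, (forall z, p (fun _ => 0) z = 0) & (forall y, p y (fun _ => 0) = 0)].

(* An element  sum_i a_i x_i + p  of G is stored as the pair
   (fun t => sum_i a_i t_i, p) *)
Definition carrier := (((nat -> K) -> K) * pfun)%type.

Definition is_linform (l : (nat -> K) -> K) : Prop :=
  exists (n : nat) (a : nat -> K), l = fun t => \sum_(i < n) a i * t i.

Definition inG (u : carrier) : Prop := is_linform u.1 /\ is_sq_poly u.2.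

Definition gx (i : nat) : carrier := (fun t => t i, fun _ _ => 0).
Definition gpoly (p : pfun) : carrier := (fun _ => 0, p).

Definition gzero : carrier := (fun _ => 0, fun _ _ => 0).
Definition gadd (u v : carrier) : carrier :=
  (fun t => u.1 t + v.1 t, fun y z => u.2 y z + v.2 y z).
Definition gscale (c : K) (u : carrier) : carrier :=
  (fun t => c * u.1 t, fun y z => c * u.2 y z).

(* multiplication of G: x_i x_j = y_i z_j, x_i.m = y_i m, m.x_j = m z_j,
   m.m' = m m'; i.e. (l + p)(l' + q) = (l(y) + p)(l'(z) + q) *)
Definition gmul (u v : carrier) : carrier :=
  (fun _ => 0, fun y z => (u.1 y + u.2 y z) * (v.1 z + v.2 y z)).

Definition is_ideal (I : carrier -> Prop) : Prop :=
  (forall u, I u -> inG u) /\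
  I gzero /\
  (forall u v, I u -> I v -> I (gadd u v)) /\
  (forall c u, I u -> I (gscale c u)) /\
  (forall u v, inG u -> I v -> I (gmul u v)) /\
  (forall u v, inG u -> I v -> I (gmul v u)).

Definition is_endo (phi : carrier -> carrier) : Prop :=
  [/\ forall u, inG u -> inG (phi u),
      forall u v, inG u -> inG v -> phi (gadd u v) = gadd (phi u) (phi v),
      forall c u, inG u -> phi (gscale c u) = gscale c (phi u)
    & forall u v, inG u -> inG v -> phi (gmul u v) = gmul (phi u) (phi v)].

Definition is_Tideal (I : carrier -> Prop) : Prop :=
  is_ideal I /\ forall phi, is_endo phi -> forall u, I u -> I (phi u).

Definition in_Tideal_gen (f u : carrier) : Prop :=
  forall I, is_Tideal I -> I f -> I u.

End Model.

Definition standard_poly (K : fieldType) (k : nat) : pfun K :=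
  fun y z => (y 0%N * z 1%N - y 1%N * z 0%N) ^+ k.

Definition target_poly (K : fieldType) (k : nat) : pfun K :=
  fun y z => (y 0%N * z 0%N) ^+ k * (y 0%N - z 0%N) ^+ k.

Definition w_admissible (mu1 mu2 j : nat) : Prop :=
  (mu2 <= mu1)%N /\
  (if mu2 == 0%N then (1 <= j)%N && (j <= mu1 - 1)%N else (j <= mu1 - mu2)%N).

Definition w_poly (K : fieldType) (mu1 mu2 j : nat) : pfun K :=
  if mu2 == 0%N then fun y z => y 0%N ^+ j * z 0%N ^+ (mu1 - j)
  else fun y z => y 0%N ^+ j * (y 0%N * z 1%N - y 1%N * z 0%N) ^+ mu2
                  * z 0%N ^+ (mu1 - mu2 - j).

Arguments standard_poly K k : clear implicits.
Arguments target_poly K k : clear implicits.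
Arguments w_poly K mu1 mu2 j : clear implicits.

From HB Require Import structures.
From mathcomp Require Import all_boot all_order all_algebra.
From mathcomp Require Import ring zify.
From Stdlib Require Import FunctionalExtensionality.
Import Order.TTheory GRing.Theory Num.Theory.
Local Open Scope ring_scope.
Set Implicit Arguments. Unset Strict Implicit.

(* The endomorphism of F(B) fixing x_1 and sending x_2 to x_1 x_1 acts on F(B)^2
   by y_2, z_2 |-> y_1 z_1, so it maps (y_1 z_2 - y_2 z_1)^k to
   (y_1 (y_1 z_1) - (y_1 z_1) z_1)^k = (y_1 z_1)^k (y_1 - z_1)^k.  A T-ideal is an
   ideal, so it also contains the products with the elements w^(j)_mu of F(B)^2. *)

Section PolynomialFunctions.
Variable K : fieldType.
Implicit Types p q : pfun K.

Lemma is_poly_ext p q : is_poly p -> (forall y z, p y z = q y z) -> is_poly q.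
Proof.
move=> hp epq; suff -> : q = p by [].
by apply: functional_extensionality => y; apply: functional_extensionality => z.
Qed.

Lemma is_polyB p q : is_poly p -> is_poly q -> is_poly (fun y z => p y z - q y z).
Proof.
move=> hp hq; apply: (is_poly_ext (PolyAdd hp (PolyMul (PolyC (-1)) hq))) => y z.
by rewrite mulN1r.
Qed.

Lemma is_polyX p n : is_poly p -> is_poly (fun y z => p y z ^+ n).
Proof.
move=> hp; elim: n => [|n IHn].
  by apply: (is_poly_ext (PolyC 1)) => y z; rewrite expr0.
by apply: (is_poly_ext (PolyMul hp IHn)) => y z; rewrite exprS.
Qed.

Lemma is_poly_sum n (a : nat -> K) (p : nat -> pfun K) :
  (forall i, is_poly (p i)) -> is_poly (fun y z => \sum_(i < n) a i * p i y z).
Proof.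
move=> hp; elim: n => [|n IHn].
  by apply: (is_poly_ext (PolyC 0)) => y z; rewrite big_ord0.
apply: (is_poly_ext (PolyAdd IHn (PolyMul (PolyC (a n)) (hp n)))) => y z.
by rewrite big_ord_recr.
Qed.

Lemma is_poly_comp q (Y Z : nat -> pfun K) :
  is_poly q -> (forall i, is_poly (Y i)) -> (forall i, is_poly (Z i)) ->
  is_poly (fun y z => q (fun i => Y i y z) (fun i => Z i y z)).
Proof.
move=> hq hY hZ; elim: hq => [c|i|i|p1 p2 _ IH1 _ IH2|p1 p2 _ IH1 _ IH2].
- exact: PolyC.
- exact: hY.
- exact: hZ.
- exact: PolyAdd IH1 IH2.
- exact: PolyMul IH1 IH2.
Qed.

Lemma is_sq_polyM p q : is_poly p -> is_poly q ->
  (forall z, p (fun=> 0) z = 0) -> (forall y, q y (fun=> 0) = 0) ->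
  is_sq_poly (fun y z => p y z * q y z).
Proof.
move=> hp hq p0 q0; split; first exact: PolyMul.
- by move=> z; rewrite p0 mul0r.
- by move=> y; rewrite q0 mulr0.
Qed.

Lemma is_sq_polyMl p q : is_poly q -> is_sq_poly p ->
  is_sq_poly (fun y z => q y z * p y z).
Proof.
move=> hq [hp p0 p0']; split; first exact: PolyMul.
- by move=> z; rewrite p0 mulr0.
- by move=> y; rewrite p0' mulr0.
Qed.

Lemma is_sq_polyMr p q : is_sq_poly p -> is_poly q ->
  is_sq_poly (fun y z => p y z * q y z).
Proof.
move=> [hp p0 p0'] hq; split; first exact: PolyMul.
- by move=> z; rewrite p0 mul0r.
- by move=> y; rewrite p0' mul0r.
Qed.

Lemma standard_poly_sq n : (0 < n)%N -> is_sq_poly (standard_poly K n).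
Proof.
move=> n_gt0; rewrite /standard_poly; split.
- by apply/is_polyX/is_polyB; exact: PolyMul (PolyY K _) (PolyZ K _).
- by move=> z; rewrite !mul0r subrr expr0n gtn_eqF.
- by move=> y; rewrite !mulr0 subrr expr0n gtn_eqF.
Qed.

Lemma w_poly_sq mu1 mu2 j :
  w_admissible mu1 mu2 j -> is_sq_poly (w_poly K mu1 mu2 j).
Proof.
rewrite /w_admissible /w_poly.
have [_ [_ /andP[j_gt0 j_lt]] | mu2_neq0 _] := eqVneq mu2 0%N.
  apply: is_sq_polyM; [exact/is_polyX/PolyY | exact/is_polyX/PolyZ | |].
  - by move=> z; rewrite expr0n gtn_eqF.
  - by move=> y; rewrite expr0n gtn_eqF //; lia.
apply: is_sq_polyMr; last exact/is_polyX/PolyZ.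
by apply: is_sq_polyMl; [exact/is_polyX/PolyY | apply: standard_poly_sq; rewrite lt0n].
Qed.

End PolynomialFunctions.

Section Carrier.
Variable K : fieldType.
Implicit Types (p q : pfun K) (l : (nat -> K) -> K) (u v f : carrier K).

Lemma is_linform0 : is_linform (fun _ : nat -> K => 0).
Proof. by exists 0%N, (fun=> 0); apply: functional_extensionality => t; rewrite big_ord0. Qed.

Lemma linform_at0 l : is_linform l -> l (fun=> 0) = 0.
Proof. by move=> [n [a ->]]; apply: big1 => i _; rewrite mulr0. Qed.

Lemma linformD l s t : is_linform l -> l (fun i => s i + t i) = l s + l t.
Proof. by move=> [n [a ->]]; rewrite -big_split; apply: eq_bigr => i _; rewrite mulrDr. Qed.

Lemma inG_gpoly p : is_sq_poly p -> inG (gpoly p).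
Proof. by split; first exact: is_linform0. Qed.

Lemma gmul_gpoly p q : gmul (gpoly p) (gpoly q) = gpoly (fun y z => p y z * q y z).
Proof.
congr pair; apply: functional_extensionality => y.
by apply: functional_extensionality => z; rewrite !add0r.
Qed.

Lemma in_Tideal_gen_endo f (phi : carrier K -> carrier K) :
  is_endo phi -> in_Tideal_gen f (phi f).
Proof. by move=> endo_phi I [_ TI] If; apply: TI. Qed.

Lemma in_Tideal_gen_mulr f u v :
  in_Tideal_gen f u -> inG v -> in_Tideal_gen f (gmul u v).
Proof.
move=> fu Gv I TI If; have Iu := fu I TI If.
by case: TI => [[_ [_ [_ [_ [_ Imulr]]]]] _]; apply: Imulr.
Qed.

End Carrier.

Section DiagonalSubstitution.
Variables (K : fieldType) (e : nat -> K) (p : nat -> pfun K).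
Hypothesis p_sq : forall i, is_sq_poly (p i).

(* The algebra map x_i |-> e_i x_i + p_i; on F(B)^2 it substitutes
   y_i |-> e_i y_i + p_i and z_i |-> e_i z_i + p_i. *)
Definition gsubst (u : carrier K) : carrier K :=
  (fun t => u.1 (fun i => e i * t i),
   fun y z => u.1 (fun i => p i y z)
              + u.2 (fun i => e i * y i + p i y z) (fun i => e i * z i + p i y z)).

Lemma gsubst_gpoly q :
  gsubst (gpoly q) =
  gpoly (fun y z => q (fun i => e i * y i + p i y z) (fun i => e i * z i + p i y z)).
Proof.
congr pair; apply: functional_extensionality => y.
by apply: functional_extensionality => z; rewrite add0r.
Qed.

Lemma subst_at0y z :
  (fun i => e i * 0 + p i (fun=> 0) z) = (fun=> 0) /\ (fun i => p i (fun=> 0) z) = (fun=> 0).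
Proof.
by split; apply: functional_extensionality => i; case: (p_sq i) => _ -> _; rewrite ?mulr0 ?addr0.
Qed.

Lemma subst_at0z y :
  (fun i => e i * 0 + p i y (fun=> 0)) = (fun=> 0) /\ (fun i => p i y (fun=> 0)) = (fun=> 0).
Proof.
by split; apply: functional_extensionality => i; case: (p_sq i) => _ _ ->; rewrite ?mulr0 ?addr0.
Qed.

Lemma gsubst_inG u : inG u -> inG (gsubst u).
Proof.
move=> [lin_u [poly_u u_y0 u_z0]]; have [n [a def_u1]] := lin_u; split.
  exists n, (fun i => a i * e i); rewrite /= def_u1.
  by apply: functional_extensionality => t; apply: eq_bigr => i _; rewrite mulrA.
split.
- apply: PolyAdd; first by rewrite def_u1; apply: is_poly_sum => i; case: (p_sq i).
  apply: is_poly_comp poly_u _ _ => i; apply: PolyAdd; try by case: (p_sq i).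
    exact: PolyMul (PolyC _) (PolyY K i).
  exact: PolyMul (PolyC _) (PolyZ K i).
- by move=> z /=; case: (subst_at0y z) => -> ->; rewrite u_y0 linform_at0 ?addr0.
- by move=> y /=; case: (subst_at0z y) => -> ->; rewrite u_z0 linform_at0 ?addr0.
Qed.

Lemma gsubst_is_endo : is_endo gsubst.
Proof.
split; first exact: gsubst_inG.
- move=> u v _ _; congr pair; apply: functional_extensionality => y.
  by apply: functional_extensionality => z; rewrite addrACA.
- move=> c u _; congr pair; apply: functional_extensionality => y.
  by apply: functional_extensionality => z; rewrite mulrDr.
- move=> u v [lin_u _] [lin_v _]; congr pair; apply: functional_extensionality => y.
  apply: functional_extensionality => z.
  by rewrite /= add0r (linformD _ _ lin_u) (linformD _ _ lin_v) !addrA.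
Qed.

End DiagonalSubstitution.

Lemma target_in_Tideal_gen (K : fieldType) (k : nat) :
  in_Tideal_gen (gpoly (standard_poly K k)) (gpoly (target_poly K k)).
Proof.
pose e i : K := if i == 1%N then 0 else 1.
pose p i : pfun K := if i == 1%N then fun y z => y 0%N * z 0%N else fun _ _ => 0.
have p_sq i : is_sq_poly (p i).
  rewrite /p; case: (i == 1%N); last by split; first exact: PolyC.
  by apply: is_sq_polyM; [exact: PolyY | exact: PolyZ | |].
suff <- : gsubst e p (gpoly (standard_poly K k)) = gpoly (target_poly K k).
  by apply: in_Tideal_gen_endo; apply: gsubst_is_endo.
rewrite gsubst_gpoly; congr gpoly; apply: functional_extensionality => y.
apply: functional_extensionality => z.
by rewrite /standard_poly /target_poly /e /p /= -exprMn; congr (_ ^+ _); ring.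
Qed.

Theorem lemma4p4 (K : fieldType) (charK : [pchar K] =i pred0) (k : nat) :
  (1 <= k)%N ->
  in_Tideal_gen (gpoly (standard_poly K k)) (gpoly (target_poly K k)) /\
  (forall mu1 mu2 j : nat, w_admissible mu1 mu2 j ->
     in_Tideal_gen (gpoly (standard_poly K k))
       (gpoly (fun y z => target_poly K k y z * w_poly K mu1 mu2 j y z))).
Proof.
move=> _; split; first exact: target_in_Tideal_gen.
move=> mu1 mu2 j adm; rewrite -gmul_gpoly.
apply: in_Tideal_gen_mulr; first exact: target_in_Tideal_gen.
by apply: inG_gpoly; apply: w_poly_sq.
Qed.
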